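(* Let $N\ge1$ and $q$ be integers with $0\le q<\frac N2$. Let $d:[0,\infty)\to\mathbb{R}$, let $\nu_1,\dots,\nu_N:[0,\infty)\to\mathbb{R}$ be bounded, and let $\eta:[0,\infty)\to\mathbb{R}^N$ be arbitrary (unbounded allowed) such that for every $t\ge0$ there is a set $W(t)\subseteq\{1,\dots,N\}$ with $\operatorname{supp}(\eta(t))\subseteq W(t)$ and $\operatorname{card}(W(t))\le q$ (the set $W(t)$ is unknown and may vary with $t$). Let $D_j(t)=d(t)+\nu_j(t)+\eta_j(t)$. For every $J\subseteq\{1,\dots,N\}$ with $\operatorname{card}(J)=N-q$ define $$\hat d_J(t)=\frac{1}{N-q}\sum_{j\in J}D_j(t),\qquad \pi_J(t)=\max_{j\in J}|\hat d_J(t)-D_j(t)|,$$ and let $\sigma(t)$ be any subset $J$ with $\operatorname{card}(J)=N-q$ minimizing $\pi_J(t)$. Then the fused estimate $\hat d(t)=\hat d_{\sigma(t)}(t)$ satisfies, for all $t\ge0$, $$|\hat d(t)-d(t)|\le 3\|\nu\|_\infty .$$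
   Context: For $v\in\mathbb{R}^N$, $\operatorname{supp}(v)=\{i: v_i\ne0\}$. $\|\nu_j\|_\infty=\sup_{t\ge0}|\nu_j(t)|$ and $\|\nu\|_\infty=\max_{j}\|\nu_j\|_\infty$; these bounds are not assumed known to the estimator. *)

From HB Require Import structures.
From mathcomp Require Import all_boot all_order all_algebra.
From mathcomp Require Import all_classical all_reals.
Set Implicit Arguments. Unset Strict Implicit. Unset Printing Implicit Defensive.
Import Order.TTheory GRing.Theory Num.Theory.
Local Open Scope ring_scope.
Local Open Scope classical_set_scope.

Definition meas (R : realType) (N : nat) (d : R -> R) (nu : 'I_N -> R -> R)
  (eta : R -> 'I_N -> R) (j : 'I_N) (t : R) : R := d t + nu j t + eta t j.

Definition dhat (R : realType) (N q : nat) (D : 'I_N -> R -> R)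
  (J : {set 'I_N}) (t : R) : R :=
  ((N - q)%:R)^-1 * \sum_(j in J) D j t.

Definition piJ (R : realType) (N q : nat) (D : 'I_N -> R -> R)
  (J : {set 'I_N}) (t : R) : R :=
  \big[Num.max/0]_(j in J) `|dhat q D J t - D j t|.

Definition supnorm (R : realType) (f : R -> R) : R :=
  sup [set `|f t| | t in [set t : R | 0 <= t]].

Definition nu_norm (R : realType) (N : nat) (nu : 'I_N -> R -> R) : R :=
  \big[Num.max/0]_(j < N) supnorm (nu j).

From HB Require Import structures.
From mathcomp Require Import all_boot all_order all_algebra.
From mathcomp Require Import all_classical all_reals.
From mathcomp Require Import zify.
Set Implicit Arguments. Unset Strict Implicit. Unset Printing Implicit Defensive.
Import Order.TTheory GRing.Theory Num.Theory.
Local Open Scope ring_scope.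

(* Fix a time t.  Call a sensor j "clean" if it lies outside the (unknown)
   faulty set W, and suppose every clean reading is within v of the true
   value c.  Since #|W| <= q, some set J0 of N - q sensors is entirely clean;
   its mean is within v of c (a mean of values within v of c), hence every
   reading of J0 is within 2v of that mean, i.e. pi_J0 <= 2v.  The chosen set
   sigma minimizes pi, so pi_sigma <= 2v.  Because 2q < N, sigma (of size
   N - q > q) contains a clean sensor j; then
     |dhat_sigma - c| <= |dhat_sigma - D_j| + |D_j - c| <= 2v + v = 3v. *)

Lemma mean_near (R : numFieldType) (I : finType) (J : {set I}) (x : I -> R)
    (c v : R) :
  (0 < #|J|)%N -> (forall j, j \in J -> `|x j - c| <= v) ->
  `|(#|J|%:R)^-1 * \sum_(j in J) x j - c| <= v.
Proof.
move=> J0 near_c.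
have nJ0 : (#|J|%:R : R) != 0 by rewrite pnatr_eq0 -lt0n.
have -> : (#|J|%:R)^-1 * \sum_(j in J) x j - c
          = (#|J|%:R)^-1 * \sum_(j in J) (x j - c).
  by rewrite big_split /= sumrN sumr_const mulrDr mulrN -(mulr_natl c) mulKf.
rewrite normrM ger0_norm ?invr_ge0 ?ler0n // ler_pdivrMl ?ltr0n //.
apply: le_trans (ler_norm_sum _ _ _) (le_trans (ler_sum _ near_c) _).
by rewrite sumr_const mulr_natl.
Qed.

Section Spread.
Variables (R : realType) (N q : nat) (D : 'I_N -> R -> R) (t : R).

Lemma piJ_ge (J : {set 'I_N}) (j : 'I_N) :
  j \in J -> `|dhat q D J t - D j t| <= piJ q D J t.
Proof. by move=> jJ; apply: (le_bigmax_cond _ (P := mem J)). Qed.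

Lemma piJ_le (J : {set 'I_N}) (b : R) :
  0 <= b -> (forall j, j \in J -> `|dhat q D J t - D j t| <= b) ->
  piJ q D J t <= b.
Proof. by move=> b0 hb; apply: bigmax_le. Qed.

End Spread.

Section Fusion.
Variables (R : realType) (N q : nat) (D : 'I_N -> R -> R) (t c v : R).
Variable W : {set 'I_N}.
Hypothesis faulty_few : (#|W| <= q)%N.
Hypothesis clean_near : forall j, j \notin W -> `|D j t - c| <= v.

Lemma clean_set_exists :
  exists2 J : {set 'I_N}, #|J| = (N - q)%N & J \subset ~: W.
Proof.
have : (N - q <= #|~: W|)%N by move: (cardsC W); rewrite card_ord; lia.
case/card_geqP => s [us size_s s_clean].
exists [set j in s]; first by rewrite cardsE -size_s; apply/card_uniqP.
by apply/fintype.subsetP => j; rewrite inE => /s_clean.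
Qed.

Lemma piJ_clean (J : {set 'I_N}) :
  #|J| = (N - q)%N -> (0 < N - q)%N -> J \subset ~: W ->
  piJ q D J t <= 2 * v.
Proof.
move=> cardJ Nq0 /fintype.subsetP JW.
have cleanJ j : j \in J -> `|D j t - c| <= v.
  by move=> /JW; rewrite inE => /clean_near.
have mean_c : `|dhat q D J t - c| <= v.
  by rewrite /dhat -cardJ; apply: mean_near => //; rewrite cardJ.
have v0 : 0 <= v := le_trans (normr_ge0 _) mean_c.
apply: piJ_le; first by rewrite mulr_ge0.
move=> j jJ; rewrite mulr2n mulrDl mul1r.
rewrite -(subrKA c); apply: le_trans (ler_normD _ _) _.
by rewrite lerD // distrC cleanJ.
Qed.

Lemma clean_member (J : {set 'I_N}) :
  (q.*2 < N)%N -> #|J| = (N - q)%N -> exists2 j, j \in J & j \notin W.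
Proof.
move=> hq cardJ.
have /card_gt0P [j] : (0 < #|J :\: W|)%N.
  rewrite cardsD cardJ subn_gt0.
  have : (#|J :&: W| <= #|W|)%N by apply/subset_leq_card/subsetIr.
  by move: hq faulty_few; rewrite -addnn; lia.
by rewrite inE => /andP [jW jJ]; exists j.
Qed.

Lemma minimal_spread_fusion (S : {set 'I_N}) :
  (q.*2 < N)%N -> #|S| = (N - q)%N ->
  (forall J : {set 'I_N}, #|J| = (N - q)%N -> piJ q D S t <= piJ q D J t) ->
  `|dhat q D S t - c| <= 3 * v.
Proof.
move=> hq cardS S_min.
have Nq0 : (0 < N - q)%N by rewrite subn_gt0; move: hq; rewrite -addnn; lia.
have [J0 cardJ0 J0W] := clean_set_exists.
have piS : piJ q D S t <= 2 * v := le_trans (S_min J0 cardJ0) (piJ_clean cardJ0 Nq0 J0W).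
have [j jS jW] := clean_member hq cardS.
rewrite -(subrKA (D j t)); apply: le_trans (ler_normD _ _) _.
rewrite -[3]/(2 + 1)%:R natrD mulrDl mul1r.
by rewrite lerD ?clean_near // (le_trans (piJ_ge q D t jS)).
Qed.

End Fusion.

Lemma nu_norm_bound (R : realType) (N : nat) (nu : 'I_N -> R -> R) :
  (forall j : 'I_N, exists M : R, forall t : R, 0 <= t -> `|nu j t| <= M) ->
  forall j t, 0 <= t -> `|nu j t| <= nu_norm nu.
Proof.
move=> hnu j t t0.
apply: (@le_trans _ _ (supnorm (nu j))); last first.
  exact: (le_bigmax_cond _ (P := xpredT)).
have [M hM] := hnu j.
apply: ub_le_sup; last by exists t.
by exists M => _ [s s0 <-]; apply: hM.
Qed.

Theorem theorem2 (R : realType) (N q : nat) (hN : (1 <= N)%N)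
  (hq : (q.*2 < N)%N)
  (d : R -> R) (nu : 'I_N -> R -> R) (eta : R -> 'I_N -> R)
  (hnu : forall j : 'I_N, exists M : R, forall t : R, 0 <= t -> `|nu j t| <= M)
  (heta : forall t : R, 0 <= t ->
     exists W : {set 'I_N}, (#|W| <= q)%N /\ (forall j : 'I_N, j \notin W -> eta t j = 0))
  (sigma : R -> {set 'I_N})
  (hsig_card : forall t : R, 0 <= t -> #|sigma t| = (N - q)%N)
  (hsig_min : forall t : R, 0 <= t -> forall J : {set 'I_N}, #|J| = (N - q)%N ->
     piJ q (meas d nu eta) (sigma t) t <= piJ q (meas d nu eta) J t) :
  forall t : R, 0 <= t ->
    `|dhat q (meas d nu eta) (sigma t) t - d t| <= 3 * nu_norm nu.
Proof.
move=> t t0.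
have [W [faulty_few eta_off]] := heta t t0.
have clean_near j : j \notin W -> `|meas d nu eta j t - d t| <= nu_norm nu.
  move=> jW; rewrite /meas eta_off // addr0 addrC addKr.
  exact: nu_norm_bound.
apply: (minimal_spread_fusion faulty_few clean_near hq); first exact: hsig_card.
exact: hsig_min.
Qed.
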